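(* Consider the model below with $M=M_f=N=1$ and $\epsilon_2\ge0$, and fix all parameters other than $\epsilon_1$. (i) There exists $\bar{\epsilon}_{RPE}\in[-\infty,\infty)$, depending only on the model parameters, such that for every $\epsilon_1\in\mathbb{R}$ a restricted perceptions equilibrium (RPE) exists if and only if $\epsilon_1\ge\bar{\epsilon}_{RPE}$; moreover $\bar{\epsilon}_{RPE}=-\infty$ if $q=1$. (ii) Let $\bar{\epsilon}_{REE}\in[-\infty,\infty)$ be the number such that a rational expectations equilibrium (REE) exists if and only if $\epsilon_1\ge\bar{\epsilon}_{REE}$. Then $\bar{\epsilon}_{REE}\ge\bar{\epsilon}_{RPE}$ if and only if $p+q\ge1$.
   Context: Parameters: $0<\beta<1$, $\sigma,\lambda,\mu>0$, $\psi>1$, $p,q\in(0,1]$ with $(p,q)\neq(1,1)$. The shock $\epsilon_t$ is a two-state Markov chain on $\{\epsilon_1,\epsilon_2\}$ with $\Pr(\epsilon_{t+1}=\epsilon_1\mid\epsilon_t=\epsilon_1)=p$, $\Pr(\epsilon_{t+1}=\epsilon_2\mid\epsilon_t=\epsilon_2)=q$; $\bar q:=(1-p)/(2-p-q)$ is the stationary probability of state 2. Model: $x_t=\hat E_t x_{t+1}-\sigma(i_t-\hat E_t\pi_{t+1})+\epsilon_t$, $\pi_t=\lambda x_t+\beta\hat E_t\pi_{t+1}$, $i_t=\max\{\psi\pi_t,-\mu\}$. For vectors $Y_j=(x_j,\pi_j)$, $j=1,2$, and forecasts $Y^e_j=(x^e_j,\pi^e_j)$, say $(Y_1,Y_2)$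 solves the model given $(Y^e_1,Y^e_2)$ if for $j=1,2$, with $i_j=\max\{\psi\pi_j,-\mu\}$, $x_j=x^e_j-\sigma(i_j-\pi^e_j)+\epsilon_j$ and $\pi_j=\lambda x_j+\beta\pi^e_j$. An REE is $(Y_1,Y_2)$ solving the model given $Y^e_1=pY_1+(1-p)Y_2$, $Y^e_2=(1-q)Y_1+qY_2$. An RPE is $(Y_1,Y_2)$ solving the model given $Y^e_1=Y^e_2=\bar Y:=\bar qY_2+(1-\bar q)Y_1$ (agents forecast with the unconditional mean, and the forecast equals the actual unconditional mean). *)

From Stdlib Require Import Reals.
Open Scope R_scope.

Definition solves (beta sigma lambda mu psi e x pi xe pie : R) : Prop :=
  let i := Rmax (psi * pi) (- mu) in
  x = xe - sigma * (i - pie) + e /\ pi = lambda * x + beta * pie.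

Definition REE_exists (beta sigma lambda mu psi p q e1 e2 : R) : Prop :=
  exists x1 pi1 x2 pi2 : R,
    solves beta sigma lambda mu psi e1 x1 pi1
      (p * x1 + (1 - p) * x2) (p * pi1 + (1 - p) * pi2) /\
    solves beta sigma lambda mu psi e2 x2 pi2
      ((1 - q) * x1 + q * x2) ((1 - q) * pi1 + q * pi2).

(* stationary probability of state 2 *)
Definition qbar (p q : R) : R := (1 - p) / (2 - p - q).

(* An RPE exists: both states use the unconditional mean as forecast. *)
Definition RPE_exists (beta sigma lambda mu psi p q e1 e2 : R) : Prop :=
  exists x1 pi1 x2 pi2 : R,
    let xb := qbar p q * x2 + (1 - qbar p q) * x1 in
    let pib := qbar p q * pi2 + (1 - qbar p q) * pi1 in
    solves beta sigma lambda mu psi e1 x1 pi1 xb pib /\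
    solves beta sigma lambda mu psi e2 x2 pi2 xb pib.

(* Thresholds in [-oo, oo): None = -oo, Some a = a. *)
Definition above_thr (t : option R) (e : R) : Prop :=
  match t with None => True | Some a => a <= e end.

Definition ext_le (s t : option R) : Prop :=
  match s, t with
  | None, _ => True
  | Some _, None => False
  | Some a, Some b => a <= b
  end.

From Stdlib Require Import Reals Lra.
Open Scope R_scope.

(* Shifting inflation by the effective lower bound, [u_j = pi_j + mu / psi], and
   eliminating [x_j] turns both equilibrium notions into the piecewise-linear system
     kink D u1 = (A - k12) u1 + k12 u2 + E1,   kink D u2 = k21 u1 + (A - k21) u2 + E2
   with [A = 1 + lambda sigma], [D = 1 + lambda sigma psi],
   [E_j = lambda (e_j + sigma mu (psi - 1) / psi)], and [kink D] of slope 1 on the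
   negatives and slope [D] on the positives.  For [E2 > 0] and [k21 > 0] it is
   solvable iff [E1] is at least the smaller of the two values of [E1] at the kinks
   of the solution set of the second equation.  RPE forecasts give [k12 = w A],
   [k21 = (1 - w) A] with [w = qbar p q]; REE forecasts give [k12 = w b],
   [k21 = (1 - w) b] with [b = (2 - p - q) (A + beta (1 - p - q))].  The threshold
   decreases in the coupling strength, and [b <= A] iff [p + q >= 1].  For [q = 1]
   the RPE system decouples and is solvable for every shock. *)

Definition kink (D u : R) : R := u + (D - 1) * Rmax u 0.

Lemma kink_nonneg (D u : R) : 0 <= u -> kink D u = D * u.
Proof. intros Hu. unfold kink. rewrite Rmax_left by lra. ring. Qed.

Lemma kink_nonpos (D u : R) : u <= 0 -> kink D u = u.
Proof. intros Hu. unfold kink. rewrite Rmax_right by lra. ring. Qed.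

Definition kink_sys (D A k12 k21 E F u1 u2 : R) : Prop :=
  kink D u1 - (A - k12) * u1 - k12 * u2 = E /\
  kink D u2 - k21 * u1 - (A - k21) * u2 = F.

(* The values of [E] at the solutions of the second equation with [u1 = 0],
   resp. [u2 = 0]. *)
Definition corner_u1 (D A k12 k21 F : R) : R := - k12 * F / (D - A + k21).
Definition corner_u2 (A k12 k21 F : R) : R := - (1 - A + k12) * F / k21.

Definition kink_threshold (D A k12 k21 F : R) : R :=
  Rmin (corner_u1 D A k12 k21 F) (corner_u2 A k12 k21 F).

Section KinkSystem.

Variables D A k12 k21 F : R.
Hypotheses (HA : 1 < A) (HAD : A < D) (Hk12 : 0 <= k12) (Hk21 : 0 < k21) (HF : 0 < F).

Lemma corner_u1_le_of_u1_nonneg (E u1 u2 : R) :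
  kink_sys D A k12 k21 E F u1 u2 -> 0 <= u1 -> corner_u1 D A k12 k21 F <= E.
Proof.
  intros [H1 H2] Hu1. unfold corner_u1.
  assert (HG : 0 < D - A + k21) by lra.
  assert (Hc : 0 <= k12 * F / (D - A + k21)) by (apply Rle_mult_inv_pos; nra).
  rewrite kink_nonneg in H1 by exact Hu1.
  destruct (Rle_or_lt 0 u2) as [Hu2 | Hu2].
  - rewrite kink_nonneg in H2 by exact Hu2.
    assert (Hgap : E - - k12 * F / (D - A + k21)
                   = u1 * ((D - A) * (D - A + k21 + k12)) / (D - A + k21))
      by (rewrite <- H1, <- H2; field; lra).
    assert (0 <= u1 * ((D - A) * (D - A + k21 + k12)) / (D - A + k21)).
    { apply Rle_mult_inv_pos; [apply Rmult_le_pos; nra | exact HG]. }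
    lra.
  - nra.
Qed.

Lemma kink_threshold_le_of_u1_neg (E u1 u2 : R) :
  kink_sys D A k12 k21 E F u1 u2 -> u1 < 0 -> kink_threshold D A k12 k21 F <= E.
Proof.
  intros [H1 H2] Hu1. unfold kink_threshold.
  pose proof (Rmin_l (corner_u1 D A k12 k21 F) (corner_u2 A k12 k21 F)).
  pose proof (Rmin_r (corner_u1 D A k12 k21 F) (corner_u2 A k12 k21 F)).
  set (m := Rmin _ _) in *.
  unfold corner_u1, corner_u2 in *.
  rewrite kink_nonpos in H1 by lra.
  destruct (Rle_or_lt 0 u2) as [Hu2 | Hu2].
  - rewrite kink_nonneg in H2 by exact Hu2.
    set (th := (D - A + k21) * u2 / F).
    assert (Hth : 0 <= th <= 1).
    { unfold th. split; [apply Rle_mult_inv_pos; nra |].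
      apply Rmult_le_reg_r with F; [lra |].
      replace ((D - A + k21) * u2 / F * F) with ((D - A + k21) * u2) by (field; lra).
      nra. }
    assert (HE : E = (1 - th) * (- (1 - A + k12) * F / k21) + th * (- k12 * F / (D - A + k21))).
    { assert (Hu1e : u1 = ((D - A + k21) * u2 - F) / k21) by (rewrite <- H2; field; lra).
      rewrite <- H1, Hu1e. unfold th. field. lra. }
    nra.
  - rewrite kink_nonpos in H2 by lra.
    destruct (Rle_or_lt (1 - A + k12) 0).
    + assert (0 <= k12 * F / (D - A + k21)) by (apply Rle_mult_inv_pos; nra).
      nra.
    + assert (Hlin : E * k21 + (1 - A + k12) * F
                     = (1 - A) * (1 - A + k12 + k21) * u2) by (rewrite <- H1, <- H2; ring).
      assert (- (1 - A + k12) * F / k21 < E).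
      { apply Rmult_lt_reg_r with k21; [exact Hk21 |].
        replace (- (1 - A + k12) * F / k21 * k21) with (- (1 - A + k12) * F) by (field; lra).
        assert (0 < (A - 1) * (1 - A + k12 + k21)) by nra.
        nra. }
      lra.
Qed.

Lemma kink_threshold_le (E u1 u2 : R) :
  kink_sys D A k12 k21 E F u1 u2 -> kink_threshold D A k12 k21 F <= E.
Proof.
  intros Hsys. destruct (Rle_or_lt 0 u1) as [Hu1 | Hu1].
  - apply Rle_trans with (corner_u1 D A k12 k21 F); [apply Rmin_l |].
    exact (corner_u1_le_of_u1_nonneg E u1 u2 Hsys Hu1).
  - exact (kink_threshold_le_of_u1_neg E u1 u2 Hsys Hu1).
Qed.

Lemma kink_sys_solvable_above_corner_u1 (E : R) :
  corner_u1 D A k12 k21 F <= E -> exists u1 u2, kink_sys D A k12 k21 E F u1 u2.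
Proof.
  unfold corner_u1. intros HE.
  assert (HG : 0 < D - A + k21) by lra.
  set (u1 := (E + k12 * F / (D - A + k21)) * (D - A + k21)
             / ((D - A) * (D - A + k21 + k12))).
  set (u2 := (F + k21 * u1) / (D - A + k21)).
  assert (Hu1 : 0 <= u1).
  { apply Rle_mult_inv_pos; [apply Rmult_le_pos |]; nra. }
  assert (Hu2 : 0 <= u2) by (apply Rle_mult_inv_pos; nra).
  exists u1, u2. unfold kink_sys.
  rewrite (kink_nonneg D u1 Hu1), (kink_nonneg D u2 Hu2).
  unfold u2, u1. split; field; lra.
Qed.

Lemma kink_sys_solvable_between_corners (E : R) :
  corner_u2 A k12 k21 F <= E -> E < corner_u1 D A k12 k21 F ->
  exists u1 u2, kink_sys D A k12 k21 E F u1 u2.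
Proof.
  intros H2 H1.
  set (c1 := corner_u1 D A k12 k21 F) in *. set (c2 := corner_u2 A k12 k21 F) in *.
  set (th := (E - c2) / (c1 - c2)).
  assert (Hth : 0 <= th < 1).
  { unfold th. split; [apply Rle_mult_inv_pos; lra |].
    apply Rmult_lt_reg_r with (c1 - c2); [lra |].
    replace ((E - c2) / (c1 - c2) * (c1 - c2)) with (E - c2) by (field; lra). lra. }
  assert (HE : E = c2 + th * (c1 - c2)) by (unfold th; field; lra).
  set (u1 := (th - 1) * F / k21).
  set (u2 := th * F / (D - A + k21)).
  assert (Hu1 : u1 <= 0).
  { unfold u1. apply Rmult_le_reg_r with k21; [exact Hk21 |].
    replace ((th - 1) * F / k21 * k21) with ((th - 1) * F) by (field; lra). nra. }
  assert (Hu2 : 0 <= u2) by (apply Rle_mult_inv_pos; nra).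
  exists u1, u2. unfold kink_sys.
  rewrite (kink_nonpos D u1 Hu1), (kink_nonneg D u2 Hu2).
  rewrite HE. unfold c1, c2, corner_u1, corner_u2, u1, u2. split; field; lra.
Qed.

Theorem kink_sys_solvable_iff (E : R) :
  (exists u1 u2, kink_sys D A k12 k21 E F u1 u2) <-> kink_threshold D A k12 k21 F <= E.
Proof.
  split.
  - intros (u1 & u2 & Hsys). exact (kink_threshold_le E u1 u2 Hsys).
  - unfold kink_threshold. intros HE.
    destruct (Rle_or_lt (corner_u1 D A k12 k21 F) E) as [H1 | H1].
    + exact (kink_sys_solvable_above_corner_u1 E H1).
    + apply kink_sys_solvable_between_corners; [| exact H1].
      destruct (Rle_or_lt (corner_u1 D A k12 k21 F) (corner_u2 A k12 k21 F)).
      * rewrite Rmin_left in HE by lra. lra.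
      * rewrite Rmin_right in HE by lra. exact HE.
Qed.

End KinkSystem.

Lemma kink_sys_solvable_decoupled (D A k12 k21 E F : R) :
  1 < A -> A < D -> A - 1 < k12 -> k21 = 0 -> 0 < F ->
  exists u1 u2, kink_sys D A k12 k21 E F u1 u2.
Proof.
  intros HA HAD Hk12 -> HF.
  set (u2 := F / (D - A)).
  set (y := E + k12 * u2).
  assert (Hu2 : 0 <= u2) by (apply Rle_mult_inv_pos; lra).
  destruct (Rle_or_lt 0 y) as [Hy | Hy].
  - set (u1 := y / (D - A + k12)).
    assert (Hu1 : 0 <= u1) by (apply Rle_mult_inv_pos; lra).
    exists u1, u2. unfold kink_sys.
    rewrite (kink_nonneg D u1 Hu1), (kink_nonneg D u2 Hu2).
    unfold u1, y, u2. split; field; lra.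
  - set (u1 := y / (1 - A + k12)).
    assert (Hu1 : u1 <= 0).
    { unfold u1. apply Rmult_le_reg_r with (1 - A + k12); [lra |].
      replace (y / (1 - A + k12) * (1 - A + k12)) with y by (field; lra). lra. }
    exists u1, u2. unfold kink_sys.
    rewrite (kink_nonpos D u1 Hu1), (kink_nonneg D u2 Hu2).
    unfold u1, y, u2. split; field; lra.
Qed.

Definition coupled_threshold (D A F w b : R) : R :=
  kink_threshold D A (w * b) ((1 - w) * b) F.

Section CouplingStrength.

Variables D A F w : R.
Hypotheses (HA : 1 < A) (HAD : A < D) (HF : 0 < F) (Hw : 0 <= w < 1).

Lemma corner_u1_coupled_sub (b b' : R) : 0 < b -> 0 < b' ->
  corner_u1 D A (w * b) ((1 - w) * b) F - corner_u1 D A (w * b') ((1 - w) * b') F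
  = w * F * (D - A) * (b' - b) / ((D - A + (1 - w) * b) * (D - A + (1 - w) * b')).
Proof. intros Hb Hb'. unfold corner_u1. field. split; nra. Qed.

Lemma corner_u2_coupled_sub (b b' : R) : 0 < b -> 0 < b' ->
  corner_u2 A (w * b) ((1 - w) * b) F - corner_u2 A (w * b') ((1 - w) * b') F
  = (A - 1) * F * (b' - b) / ((1 - w) * b * b').
Proof. intros Hb Hb'. unfold corner_u2. field. repeat split; nra. Qed.

Lemma corner_u1_coupled_antitone (b b' : R) : 0 < b -> b <= b' ->
  corner_u1 D A (w * b') ((1 - w) * b') F <= corner_u1 D A (w * b) ((1 - w) * b) F.
Proof.
  intros Hb Hbb'. pose proof (corner_u1_coupled_sub b b' Hb ltac:(lra)).
  assert (0 <= w * F * (D - A) * (b' - b) / ((D - A + (1 - w) * b) * (D - A + (1 - w) * b'))).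
  { apply Rle_mult_inv_pos; [repeat apply Rmult_le_pos; lra | apply Rmult_lt_0_compat; nra]. }
  lra.
Qed.

Lemma corner_u1_coupled_decreasing (b b' : R) : 0 < w -> 0 < b -> b < b' ->
  corner_u1 D A (w * b') ((1 - w) * b') F < corner_u1 D A (w * b) ((1 - w) * b) F.
Proof.
  intros Hw0 Hb Hbb'. pose proof (corner_u1_coupled_sub b b' Hb ltac:(lra)).
  assert (0 < w * F * (D - A) * (b' - b) / ((D - A + (1 - w) * b) * (D - A + (1 - w) * b'))).
  { apply Rdiv_lt_0_compat; [repeat apply Rmult_lt_0_compat; lra | apply Rmult_lt_0_compat; nra]. }
  lra.
Qed.

Lemma corner_u2_coupled_decreasing (b b' : R) : 0 < b -> b < b' ->
  corner_u2 A (w * b') ((1 - w) * b') F < corner_u2 A (w * b) ((1 - w) * b) F.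
Proof.
  intros Hb Hbb'. pose proof (corner_u2_coupled_sub b b' Hb ltac:(lra)).
  assert (0 < (A - 1) * F * (b' - b) / ((1 - w) * b * b')).
  { apply Rdiv_lt_0_compat; repeat apply Rmult_lt_0_compat; lra. }
  lra.
Qed.

Lemma coupled_threshold_antitone (b b' : R) : 0 < b -> b <= b' ->
  coupled_threshold D A F w b' <= coupled_threshold D A F w b.
Proof.
  intros Hb Hbb'. destruct (Req_dec b b') as [<- | Hne]; [lra |].
  unfold coupled_threshold, kink_threshold.
  apply Rle_trans with (Rmin (corner_u1 D A (w * b) ((1 - w) * b) F)
                             (corner_u2 A (w * b') ((1 - w) * b') F)).
  - apply Rle_min_compat_r, corner_u1_coupled_antitone; assumption.
  - apply Rle_min_compat_l, Rlt_le, corner_u2_coupled_decreasing; lra.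
Qed.

Lemma coupled_threshold_decreasing (b b' : R) : 0 < w -> 0 < b -> b < b' ->
  coupled_threshold D A F w b' < coupled_threshold D A F w b.
Proof.
  intros Hw0 Hb Hbb'. unfold coupled_threshold, kink_threshold.
  apply Rmin_glb_lt.
  - eapply Rle_lt_trans; [apply Rmin_l | apply corner_u1_coupled_decreasing; assumption].
  - eapply Rle_lt_trans; [apply Rmin_r | apply corner_u2_coupled_decreasing; assumption].
Qed.

End CouplingStrength.

Lemma Rmax_scale_shift (psi mu pi : R) : 0 < psi ->
  Rmax (psi * pi) (- mu) = - mu + psi * Rmax (pi + mu / psi) 0.
Proof.
  intros Hpsi.
  assert (Hmu : mu = psi * (mu / psi)) by (field; lra).
  set (m := mu / psi) in *. clearbody m. subst mu.
  unfold Rmax. destruct (Rle_dec (psi * pi) (- (psi * m))), (Rle_dec (pi + m) 0); nra.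
Qed.

Lemma solves_iff_kink (beta sigma lambda mu psi e x pi xe pie : R) :
  0 < lambda -> 0 < psi ->
  solves beta sigma lambda mu psi e x pi xe pie <->
  lambda * x = pi - beta * pie /\
  kink (1 + lambda * sigma * psi) (pi + mu / psi)
  = lambda * xe + (beta + lambda * sigma) * pie + lambda * e
    + (1 + lambda * sigma * psi) * (mu / psi).
Proof.
  intros Hlambda Hpsi. unfold solves, kink. cbv zeta.
  rewrite (Rmax_scale_shift psi mu pi Hpsi).
  assert (Hmu : mu = psi * (mu / psi)) by (field; lra).
  set (M := Rmax (pi + mu / psi) 0). set (m := mu / psi) in *. clearbody M m. subst mu.
  split.
  - intros [Hx Hpi]. pose proof (f_equal (Rmult lambda) Hx). split; lra.
  - intros [Hx Hk]. split; [| lra].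
    apply (Rmult_eq_reg_l lambda); lra.
Qed.

Lemma equilibrium_iff_kink_sys (beta sigma lambda mu psi t11 t12 t21 t22 e1 e2 : R) :
  0 < lambda -> 0 < psi -> t11 + t12 = 1 -> t21 + t22 = 1 ->
  (exists x1 pi1 x2 pi2 : R,
     solves beta sigma lambda mu psi e1 x1 pi1 (t11 * x1 + t12 * x2) (t11 * pi1 + t12 * pi2) /\
     solves beta sigma lambda mu psi e2 x2 pi2 (t21 * x1 + t22 * x2) (t21 * pi1 + t22 * pi2)) <->
  exists u1 u2 : R,
    kink_sys (1 + lambda * sigma * psi) (1 + lambda * sigma)
      (t12 * (1 + lambda * sigma + beta * (t12 + t21 - 1)))
      (t21 * (1 + lambda * sigma + beta * (t12 + t21 - 1)))
      (lambda * (e1 + sigma * mu * (psi - 1) / psi))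
      (lambda * (e2 + sigma * mu * (psi - 1) / psi)) u1 u2.
Proof.
  intros Hlambda Hpsi Ht1 Ht2.
  assert (Ht11 : t11 = 1 - t12) by lra. assert (Ht22 : t22 = 1 - t21) by lra. subst t11 t22.
  unfold kink_sys. split.
  - intros (x1 & pi1 & x2 & pi2 & Hs1 & Hs2).
    apply solves_iff_kink in Hs1 as [Hx1 Hk1]; [| exact Hlambda | exact Hpsi].
    apply solves_iff_kink in Hs2 as [Hx2 Hk2]; [| exact Hlambda | exact Hpsi].
    exists (pi1 + mu / psi), (pi2 + mu / psi). rewrite Hk1, Hk2.
    replace (lambda * ((1 - t12) * x1 + t12 * x2))
      with ((1 - t12) * (lambda * x1) + t12 * (lambda * x2)) by ring.
    replace (lambda * (t21 * x1 + (1 - t21) * x2))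
      with (t21 * (lambda * x1) + (1 - t21) * (lambda * x2)) by ring.
    rewrite Hx1, Hx2. split; field; lra.
  - intros (u1 & u2 & H1 & H2).
    assert (Hs : sigma * mu * (psi - 1) / psi = sigma * (psi - 1) * (mu / psi)) by (field; lra).
    rewrite Hs in H1, H2.
    set (pi1 := u1 - mu / psi). set (pi2 := u2 - mu / psi).
    set (x1 := (pi1 - beta * ((1 - t12) * pi1 + t12 * pi2)) / lambda).
    set (x2 := (pi2 - beta * (t21 * pi1 + (1 - t21) * pi2)) / lambda).
    assert (Hx1 : lambda * x1 = pi1 - beta * ((1 - t12) * pi1 + t12 * pi2))
      by (unfold x1; field; lra).
    assert (Hx2 : lambda * x2 = pi2 - beta * (t21 * pi1 + (1 - t21) * pi2))
      by (unfold x2; field; lra).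
    clearbody x1 x2.
    exists x1, pi1, x2, pi2.
    rewrite !solves_iff_kink by assumption.
    replace (pi1 + mu / psi) with u1 by (unfold pi1; ring).
    replace (pi2 + mu / psi) with u2 by (unfold pi2; ring).
    replace (lambda * ((1 - t12) * x1 + t12 * x2))
      with ((1 - t12) * (lambda * x1) + t12 * (lambda * x2)) by ring.
    replace (lambda * (t21 * x1 + (1 - t21) * x2))
      with (t21 * (lambda * x1) + (1 - t21) * (lambda * x2)) by ring.
    rewrite Hx1, Hx2. unfold pi1, pi2. repeat split; lra.
Qed.

Lemma RPE_iff_kink_sys (beta sigma lambda mu psi p q e1 e2 : R) :
  0 < lambda -> 0 < psi ->
  RPE_exists beta sigma lambda mu psi p q e1 e2 <->
  exists u1 u2 : R,
    kink_sys (1 + lambda * sigma * psi) (1 + lambda * sigma)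
      (qbar p q * (1 + lambda * sigma)) ((1 - qbar p q) * (1 + lambda * sigma))
      (lambda * (e1 + sigma * mu * (psi - 1) / psi))
      (lambda * (e2 + sigma * mu * (psi - 1) / psi)) u1 u2.
Proof.
  intros Hlambda Hpsi. set (w := qbar p q).
  transitivity (exists x1 pi1 x2 pi2 : R,
     solves beta sigma lambda mu psi e1 x1 pi1 ((1 - w) * x1 + w * x2) ((1 - w) * pi1 + w * pi2) /\
     solves beta sigma lambda mu psi e2 x2 pi2 ((1 - w) * x1 + w * x2) ((1 - w) * pi1 + w * pi2)).
  { unfold RPE_exists. fold w.
    split; intros (x1 & pi1 & x2 & pi2 & H); exists x1, pi1, x2, pi2; cbv zeta in *;
      rewrite (Rplus_comm (w * x2)), (Rplus_comm (w * pi2)) in *; exact H. }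
  rewrite equilibrium_iff_kink_sys by (assumption || ring).
  replace (w + (1 - w) - 1) with 0 by ring.
  rewrite Rmult_0_r, Rplus_0_r. reflexivity.
Qed.

Lemma REE_iff_kink_sys (beta sigma lambda mu psi p q e1 e2 : R) :
  0 < lambda -> 0 < psi -> p + q < 2 ->
  REE_exists beta sigma lambda mu psi p q e1 e2 <->
  exists u1 u2 : R,
    kink_sys (1 + lambda * sigma * psi) (1 + lambda * sigma)
      (qbar p q * ((2 - p - q) * (1 + lambda * sigma + beta * (1 - p - q))))
      ((1 - qbar p q) * ((2 - p - q) * (1 + lambda * sigma + beta * (1 - p - q))))
      (lambda * (e1 + sigma * mu * (psi - 1) / psi))
      (lambda * (e2 + sigma * mu * (psi - 1) / psi)) u1 u2.
Proof.
  intros Hlambda Hpsi Hpq. unfold REE_exists.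
  rewrite equilibrium_iff_kink_sys by (assumption || ring).
  replace (qbar p q * ((2 - p - q) * (1 + lambda * sigma + beta * (1 - p - q))))
    with ((1 - p) * (1 + lambda * sigma + beta * (1 - p + (1 - q) - 1)))
    by (unfold qbar; field; lra).
  replace ((1 - qbar p q) * ((2 - p - q) * (1 + lambda * sigma + beta * (1 - p - q))))
    with ((1 - q) * (1 + lambda * sigma + beta * (1 - p + (1 - q) - 1)))
    by (unfold qbar; field; lra).
  reflexivity.
Qed.

Lemma model_slopes (lambda sigma psi : R) :
  0 < lambda -> 0 < sigma -> 1 < psi ->
  1 < 1 + lambda * sigma /\ 1 + lambda * sigma < 1 + lambda * sigma * psi.
Proof.
  intros Hlambda Hsigma Hpsi.
  assert (0 < lambda * sigma) by (apply Rmult_lt_0_compat; lra).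
  assert (0 < lambda * sigma * (psi - 1)) by (apply Rmult_lt_0_compat; lra).
  split; lra.
Qed.

Lemma shifted_shock_pos (lambda sigma mu psi e : R) :
  0 < lambda -> 0 < sigma -> 0 < mu -> 1 < psi -> 0 <= e ->
  0 < lambda * (e + sigma * mu * (psi - 1) / psi).
Proof.
  intros Hlambda Hsigma Hmu Hpsi He.
  assert (0 < sigma * mu * (psi - 1) / psi)
    by (apply Rdiv_lt_0_compat; [repeat apply Rmult_lt_0_compat |]; lra).
  apply Rmult_lt_0_compat; lra.
Qed.

Lemma qbar_range (p q : R) : 0 < p <= 1 -> 0 < q < 1 -> 0 <= qbar p q < 1.
Proof.
  intros Hp Hq. unfold qbar. split.
  - apply Rle_mult_inv_pos; lra.
  - apply Rmult_lt_reg_r with (2 - p - q); [lra |].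
    replace ((1 - p) / (2 - p - q) * (2 - p - q)) with (1 - p) by (field; lra). lra.
Qed.

Lemma qbar_pos (p q : R) : p < 1 -> q < 1 -> 0 < qbar p q.
Proof. intros Hp Hq. apply Rdiv_lt_0_compat; lra. Qed.

Lemma qbar_absorbing (p : R) : p < 1 -> qbar p 1 = 1.
Proof. intros Hp. unfold qbar. field. lra. Qed.

Lemma above_thr_eq_Some (t : option R) (a : R) :
  (forall e, above_thr t e <-> a <= e) -> t = Some a.
Proof.
  destruct t as [b |]; simpl; intros H.
  - f_equal. apply Rle_antisym; [apply H | apply (H b)]; lra.
  - pose proof (proj1 (H (a - 1)) I). lra.
Qed.

Lemma kink_sys_solvable_iff_above_thr (D A k12 k21 F l s e : R) :
  1 < A -> A < D -> 0 <= k12 -> 0 < k21 -> 0 < F -> 0 < l ->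
  (exists u1 u2, kink_sys D A k12 k21 (l * (e + s)) F u1 u2) <->
  above_thr (Some (kink_threshold D A k12 k21 F / l - s)) e.
Proof.
  intros HA HAD Hk12 Hk21 HF Hl. rewrite kink_sys_solvable_iff by assumption. simpl.
  set (t := kink_threshold D A k12 k21 F).
  replace t with ((t / l - s + s) * l) at 1 by (field; lra).
  rewrite (Rmult_comm l).
  split; intros H.
  - apply Rmult_le_reg_r in H; lra.
  - apply Rmult_le_compat_r; lra.
Qed.

Lemma scale_shift_le_iff (t t' l s : R) : 0 < l -> t / l - s <= t' / l - s <-> t <= t'.
Proof.
  intros Hl. assert (Hl' : 0 < / l) by (apply Rinv_0_lt_compat; exact Hl).
  split; intros H.
  - apply Rmult_le_reg_r with (/ l); [exact Hl' |]. unfold Rdiv in H. lra.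
  - apply Rplus_le_compat_r, Rmult_le_compat_r; lra.
Qed.

Lemma RPE_threshold_le_REE_threshold_iff (D A F beta p q : R) :
  1 < A -> A < D -> 0 < F -> 0 <= beta <= 1 -> 0 < p <= 1 -> 0 < q < 1 ->
  coupled_threshold D A F (qbar p q) A
    <= coupled_threshold D A F (qbar p q) ((2 - p - q) * (A + beta * (1 - p - q)))
  <-> 1 <= p + q.
Proof.
  intros HA HAD HF Hbeta Hp Hq.
  pose proof (qbar_range p q Hp Hq) as Hw.
  set (b := (2 - p - q) * (A + beta * (1 - p - q))).
  assert (Hgap : A - b = (p + q - 1) * (A + beta * (2 - p - q))) by (unfold b; ring).
  assert (HK : 0 < A + beta * (2 - p - q)) by nra.
  assert (Hb : 0 < b) by (unfold b; apply Rmult_lt_0_compat; nra).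
  split; intros H.
  - destruct (Rle_or_lt 1 (p + q)) as [Hpq | Hpq]; [exact Hpq | exfalso].
    assert (Hlt : A < b) by nra.
    pose proof (coupled_threshold_decreasing D A F (qbar p q) HA HAD HF Hw A b
                  (qbar_pos p q ltac:(lra) ltac:(lra)) ltac:(lra) Hlt).
    lra.
  - apply (coupled_threshold_antitone D A F (qbar p q) HA HAD HF Hw b A Hb). nra.
Qed.

Theorem proposition3 (beta sigma lambda mu psi p q e2 : R)
  (Hbeta : 0 < beta < 1) (Hsigma : 0 < sigma) (Hlambda : 0 < lambda)
  (Hmu : 0 < mu) (Hpsi : 1 < psi)
  (Hp : 0 < p <= 1) (Hq : 0 < q <= 1) (Hpq : ~ (p = 1 /\ q = 1))
  (He2 : 0 <= e2) :
  exists tRPE : option R,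
    (forall e1 : R,
        RPE_exists beta sigma lambda mu psi p q e1 e2 <-> above_thr tRPE e1) /\
    (q = 1 -> tRPE = None) /\
    (forall tREE : option R,
        (forall e1 : R,
            REE_exists beta sigma lambda mu psi p q e1 e2 <-> above_thr tREE e1) ->
        (ext_le tRPE tREE <-> 1 <= p + q)).
Proof.
  assert (Hpsi0 : 0 < psi) by lra.
  destruct (model_slopes lambda sigma psi Hlambda Hsigma Hpsi) as [HA HAD].
  pose proof (shifted_shock_pos lambda sigma mu psi e2 Hlambda Hsigma Hmu Hpsi He2) as HF.
  set (s := sigma * mu * (psi - 1) / psi) in *.
  set (A := 1 + lambda * sigma) in *. set (D := 1 + lambda * sigma * psi) in *.
  set (F := lambda * (e2 + s)) in *.
  pose proof (fun e1 => RPE_iff_kink_sys beta sigma lambda mu psi p q e1 e2 Hlambda Hpsi0) as HRPE.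
  fold s A D F in HRPE.
  destruct (Req_dec q 1) as [-> | Hq1].
  - assert (Hp1 : p < 1) by (destruct (Req_dec p 1); [tauto | lra]).
    exists None. split; [| split; [reflexivity | intros tREE _; simpl; lra]].
    intros e1. simpl. split; [trivial | intros _]. apply HRPE.
    rewrite qbar_absorbing by exact Hp1.
    apply kink_sys_solvable_decoupled; lra.
  - assert (Hq' : 0 < q < 1) by lra.
    pose proof (qbar_range p q Hp Hq') as Hw.
    exists (Some (coupled_threshold D A F (qbar p q) A / lambda - s)).
    split; [| split; [lra |]].
    + intros e1. rewrite HRPE. apply kink_sys_solvable_iff_above_thr; nra.
    + intros tREE HREE.
      assert (Hb : 0 < (2 - p - q) * (A + beta * (1 - p - q))) by (apply Rmult_lt_0_compat; nra).
      rewrite (above_thr_eq_Some tREE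
                 (coupled_threshold D A F (qbar p q) ((2 - p - q) * (A + beta * (1 - p - q))) / lambda - s)).
      2:{ intros e1. rewrite <- HREE, REE_iff_kink_sys by lra. fold s A D F.
          apply kink_sys_solvable_iff_above_thr; nra. }
      simpl. rewrite scale_shift_le_iff by exact Hlambda.
      apply RPE_threshold_le_REE_threshold_iff; lra.
Qed.
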